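(* For every $n\ge1$, the number of non-squashing stacks whose largest box has label exactly $n$ equals $b(2n)$; that is, $f(n)-f(n-1)=b(2n)$. Equivalently, there is a bijection between sets $\{p_1<\cdots<p_k=n\}$ of positive integers with $p_1+\cdots+p_j\le p_{j+1}$ for $1\le j\le k-1$ and non-squashing partitions of $2n$ into distinct parts.
   Context: A partition $n=p_1+\cdots+p_k$ with $1\le p_1\le\cdots\le p_k$ is non-squashing if $p_1+\cdots+p_j\le p_{j+1}$ for all $1\le j\le k-1$; $b(n)$ is the number of non-squashing partitions of $n$ into distinct parts ($b(0)=1$). A non-squashing stack with labels at most $n$ is a (possibly empty) set of distinct integers $1\le p_1<p_2<\cdots<p_k\le n$ satisfying $p_1+\cdots+p_j\le p_{j+1}$ for $1\le j\le k-1$. $f(n)$ denotes the number of such stacks (so $f(0)=1$, counting the empty stack). *)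

From mathcomp Require Import all_boot.
Set Implicit Arguments. Unset Strict Implicit. Unset Printing Implicit Defensive.

(* A list s = [:: p_1; ...; p_k] (0-indexed here) is non-squashing when
   p_1 + ... + p_j <= p_{j+1} for all 1 <= j <= k-1, i.e. for every
   0-indexed position j with 1 <= j < size s, the sum of the first j
   entries is at most the entry at position j. *)
Definition nonsquashing (s : seq nat) : bool :=
  all (fun j => \sum_(0 <= i < j) nth 0 s i <= nth 0 s j) (iota 1 (size s).-1).

Definition set_seq (m : nat) (A : {set 'I_m}) : seq nat :=
  sort leq [seq val i | i <- enum A].

(* Sets are represented as subsets of 'I_(n.+1)
   not containing 0. *)
Definition f (n : nat) : nat :=
  #|[set A : {set 'I_n.+1} | (ord0 \notin A) && nonsquashing (set_seq A)]|.

(* b n : number of non-squashing partitions of n into distinct parts, i.e.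
   sets of distinct positive integers (all necessarily <= n) with sum n
   that are non-squashing when listed increasingly. b 0 = 1 (empty set). *)
Definition b (n : nat) : nat :=
  #|[set A : {set 'I_n.+1} |
      [&& ord0 \notin A, \sum_(i in A) (val i) == n & nonsquashing (set_seq A)]]|.

(* Remove the largest box n from a stack {p_1 < ... < p_k = n}: what is left
   is a stack t with labels below n and sum(t) <= n.  Replacing the top box
   n by 2n - sum(t) >= n instead turns t into a non-squashing partition of
   2n into distinct parts, and every such partition arises this way from a
   unique t, because its largest part is at least half of 2n.  Stacks not
   containing n are exactly the stacks with labels at most n - 1. *)

From mathcomp Require Import all_boot zify.
Set Implicit Arguments. Unset Strict Implicit. Unset Printing Implicit Defensive.

Section SetSeq.

Variable m : nat.
Implicit Types (A : {set 'I_m}) (s : seq nat).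

Lemma mem_set_seq A (i : 'I_m) : (val i \in set_seq A) = (i \in A).
Proof.
rewrite /set_seq mem_sort; apply/mapP/idP => [[j jA /val_inj ->]|iA].
  by rewrite -mem_enum.
by exists i; rewrite ?mem_enum.
Qed.

Lemma set_seq_sorted A : sorted ltn (set_seq A).
Proof.
rewrite ltn_sorted_uniq_leq sort_uniq map_inj_uniq ?enum_uniq //=.
  exact: (sort_sorted leq_total).
exact: val_inj.
Qed.

Lemma set_seq_bounded A : all (fun x => x < m) (set_seq A).
Proof.
by apply/allP => x; rewrite /set_seq mem_sort => /mapP[i _ ->]; apply: ltn_ord.
Qed.

Lemma set_seq_inj : injective (@set_seq m).
Proof. by move=> A B eAB; apply/setP => i; rewrite -!mem_set_seq eAB. Qed.

Lemma sum_set_seq A : \sum_(i in A) val i = sumn (set_seq A).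
Proof.
by rewrite sumnE (perm_big _ (introT permPl (perm_sort leq _))) big_map big_enum.
Qed.

Lemma set_seqK s : sorted ltn s -> all (fun x => x < m) s ->
  set_seq [set i : 'I_m | val i \in s] = s.
Proof.
move=> s_sorted s_bounded.
apply: (irr_sorted_eq ltn_trans ltnn) => //; first exact: set_seq_sorted.
move=> x; rewrite mem_sort; apply/mapP/idP => [[i]|xs].
  by rewrite mem_enum inE => ? ->.
have xm : x < m by apply: (allP s_bounded).
by exists (Ordinal xm); rewrite ?mem_enum ?inE.
Qed.

End SetSeq.

Definition seq_below m (P : pred (seq nat)) (s : seq nat) :=
  [&& sorted ltn s, all (fun x => x < m) s & P s].

Lemma card_set_seq_leq m k (P Q : pred (seq nat)) (g h : seq nat -> seq nat) :
    (forall s, seq_below m P s -> seq_below k Q (g s)) ->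
    (forall s, seq_below m P s -> h (g s) = s) ->
  #|[set A : {set 'I_m} | P (set_seq A)]| <= #|[set B : {set 'I_k} | Q (set_seq B)]|.
Proof.
move=> gPQ gK.
set L1 := map (@set_seq m) (enum [set A : {set 'I_m} | P (set_seq A)]).
set L2 := map (@set_seq k) (enum [set B : {set 'I_k} | Q (set_seq B)]).
have L1P s : s \in L1 -> seq_below m P s.
  case/mapP => A; rewrite mem_enum inE => PA ->.
  by rewrite /seq_below PA set_seq_sorted set_seq_bounded.
have L2Q s : seq_below k Q s -> s \in L2.
  case/and3P => s_sorted s_bounded Qs; apply/mapP.
  exists [set i : 'I_k | val i \in s]; last by rewrite set_seqK.
  by rewrite mem_enum inE set_seqK.
rewrite !cardE -(size_map (@set_seq m)) -(size_map (@set_seq k)) -/L1 -/L2.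
rewrite -(size_map g); apply: uniq_leq_size.
  rewrite map_inj_in_uniq ?map_inj_uniq ?enum_uniq //; first exact: set_seq_inj.
  by move=> s t /L1P Ps /L1P Pt gst; rewrite -(gK _ Ps) -(gK _ Pt) gst.
by move=> _ /mapP[s /L1P Ps ->]; apply/L2Q/gPQ.
Qed.

Lemma card_set_seq_bij m k (P Q : pred (seq nat)) (g h : seq nat -> seq nat) :
    (forall s, seq_below m P s -> seq_below k Q (g s)) ->
    (forall s, seq_below k Q s -> seq_below m P (h s)) ->
    (forall s, seq_below m P s -> h (g s) = s) ->
    (forall s, seq_below k Q s -> g (h s) = s) ->
  #|[set A : {set 'I_m} | P (set_seq A)]| = #|[set B : {set 'I_k} | Q (set_seq B)]|.
Proof.
move=> gPQ hQP gK hK; apply/eqP; rewrite eqn_leq.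
by rewrite (card_set_seq_leq gPQ gK) (card_set_seq_leq hQP hK).
Qed.

Lemma card_set_seq_split m (P Q : pred (seq nat)) :
  #|[set A : {set 'I_m} | P (set_seq A)]| =
  #|[set A : {set 'I_m} | P (set_seq A) && ~~ Q (set_seq A)]| +
  #|[set A : {set 'I_m} | P (set_seq A) && Q (set_seq A)]|.
Proof.
rewrite -(cardID [set A : {set 'I_m} | Q (set_seq A)]) addnC.
by congr (_ + _); apply: eq_card => A; rewrite !inE andbC.
Qed.

(* Deleting the last element maps both families bijectively onto [C]. *)
Lemma card_set_seq_rcons m k (P Q C : pred (seq nat)) (u v : seq nat -> nat) :
    ~~ seq_below m P [::] -> ~~ seq_below k Q [::] ->
    (forall t x, seq_below m P (rcons t x) = (x == u t) && C t) ->
    (forall t x, seq_below k Q (rcons t x) = (x == v t) && C t) ->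
  #|[set A : {set 'I_m} | P (set_seq A)]| = #|[set B : {set 'I_k} | Q (set_seq B)]|.
Proof.
move=> notP0 notQ0 Prcons Qrcons.
pose front (s : seq nat) := take (size s).-1 s.
have frontE t x : front (rcons t x) = t by rewrite /front size_rcons -cats1 take_size_cat.
pose relast w s := rcons (front s) (w (front s)).
have relastK w w' s : relast w (relast w' s) = relast w s by rewrite /relast frontE.
have PE s : seq_below m P s -> s = relast u s /\ C (front s).
  case/lastP: s => [P0|t x]; first by case/negP: notP0.
  rewrite Prcons /relast frontE.
  by case/andP => /eqP ->.
have QE s : seq_below k Q s -> s = relast v s /\ C (front s).
  case/lastP: s => [Q0|t x]; first by case/negP: notQ0.
  rewrite Qrcons /relast frontE.
  by case/andP => /eqP ->.
apply: (@card_set_seq_bij _ _ _ _ (relast v) (relast u)).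
- by move=> s /PE[_ Ct]; rewrite /relast Qrcons eqxx.
- by move=> s /QE[_ Ct]; rewrite /relast Prcons eqxx.
- by move=> s Ps; rewrite relastK -(PE s Ps).1.
- by move=> s Qs; rewrite relastK -(QE s Qs).1.
Qed.

Lemma nonsquashing_rcons t x :
  nonsquashing (rcons t x) = nonsquashing t && (sumn t <= x).
Proof.
have fromE s : nonsquashing s =
    all (fun j => \sum_(0 <= i < j) nth 0 s i <= nth 0 s j) (iota 0 (size s)).
  by rewrite /nonsquashing; case: (size s) => //= k; rewrite big_geq.
rewrite !fromE size_rcons -addn1 iotaD all_cat /= andbT add0n.
congr (_ && _).
  apply: eq_in_all => j; rewrite mem_iota add0n => /andP[_ jt].
  rewrite nth_rcons jt; congr (_ <= _); apply: eq_big_nat => i /andP[_ ij].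
  by rewrite nth_rcons (ltn_trans ij jt).
rewrite nth_rcons ltnn eqxx; congr (_ <= _).
by rewrite sumnE [RHS](big_nth 0); apply: eq_big_nat => i /andP[_ it]; rewrite nth_rcons it.
Qed.

Lemma sorted_ltn_rcons t x :
  sorted ltn (rcons t x) = sorted ltn t && all (fun y => y < x) t.
Proof. by rewrite !(sorted_pairwise ltn_trans) pairwise_rcons andbC. Qed.

Lemma leq_sumn t x : x \in t -> x <= sumn t.
Proof.
elim: t => //= y t IHt; rewrite inE => /predU1P[->|/IHt]; first exact: leq_addr.
by move/leq_trans; apply; apply: leq_addl.
Qed.

Definition stack (s : seq nat) := (0 \notin s) && nonsquashing s.

Definition distinct_partition N (s : seq nat) :=
  [&& 0 \notin s, sumn s == N & nonsquashing s].

Lemma fE n : f n = #|[set A : {set 'I_n.+1} | stack (set_seq A)]|.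
Proof. by apply: eq_card => A; rewrite !inE /stack -(mem_set_seq A ord0). Qed.

Lemma bE n : b n = #|[set A : {set 'I_n.+1} | distinct_partition n (set_seq A)]|.
Proof.
apply: eq_card => A.
by rewrite !inE /distinct_partition -(mem_set_seq A ord0) sum_set_seq.
Qed.

Section TopBox.

Variable N : nat.
Hypothesis N_gt0 : 0 < N.

Lemma stack_without_top s :
  seq_below N.+1 (fun s => stack s && (N \notin s)) s = seq_below N stack s.
Proof.
have bounded_notin : all (fun x => x < N.+1) s && (N \notin s) = all (fun x => x < N) s.
  apply/andP/allP => [[/allP s_le Ns] x xs|s_lt].
    by rewrite ltn_neqAle -ltnS s_le // andbT; apply: contraNneq Ns => <-.
  by split; [apply/allP => x /s_lt /ltnW | apply/negP => /s_lt; rewrite ltnn].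
by rewrite /seq_below -bounded_notin; case: (stack s); rewrite ?andbF ?andbT.
Qed.

(* The common prefix of a stack with top box [N] and of the matching
   partition of [2 * N]. *)
Definition stack_below_top (t : seq nat) := seq_below N stack t && (sumn t <= N).

Lemma stack_topE t x :
  seq_below N.+1 (fun s => stack s && (N \in s)) (rcons t x) =
  (x == N) && stack_below_top t.
Proof.
rewrite /stack_below_top /seq_below /stack sorted_ltn_rcons all_rcons.
rewrite nonsquashing_rcons !mem_rcons !inE.
apply/idP/idP.
  case/and3P => /andP[t_sorted t_lt_x] /andP[x_le_N _].
  case/andP => /andP[/norP[_ t0] /andP[t_ns t_sum]] N_in.
  have xN : x = N.
    case/predU1P: N_in => [//|N_in_t]; have := allP t_lt_x N N_in_t; lia.
  by subst x; rewrite eqxx t_sorted t_lt_x t0 t_ns t_sum.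
case/andP => /eqP -> /andP[/and3P[t_sorted t_lt_N /andP[t0 t_ns]] t_sum].
rewrite t_sorted t_lt_N (negbTE t0) t_ns t_sum ltnSn eqxx /= orbF !andbT.
by rewrite eq_sym -lt0n N_gt0 andbT; apply/allP => y /(allP t_lt_N) /ltnW.
Qed.

Lemma distinct_partition_topE t x :
  seq_below (2 * N).+1 (distinct_partition (2 * N)) (rcons t x) =
  (x == 2 * N - sumn t) && stack_below_top t.
Proof.
rewrite /stack_below_top /seq_below /stack /distinct_partition sorted_ltn_rcons.
rewrite all_rcons nonsquashing_rcons sumn_rcons !mem_rcons !inE.
apply/idP/idP.
  case/and3P => /andP[t_sorted t_lt_x] /andP[_ _].
  case/and3P => /norP[_ t0] /eqP t_sum /andP[t_ns t_sum_le].
  have t_lt_N : all (fun y => y < N) t.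
    by apply/allP => y yt; have := leq_sumn yt; have := allP t_lt_x y yt; lia.
  rewrite t_sorted t_lt_N t0 t_ns /=; apply/andP; split; first by apply/eqP; lia.
  lia.
case/andP => /eqP -> /andP[/and3P[t_sorted t_lt_N /andP[t0 t_ns]] t_sum].
have t_lt_x : all (fun y => y < 2 * N - sumn t) t.
  by apply/allP => y /(allP t_lt_N); lia.
have t_le_2N : all (fun y => y < (2 * N).+1) t.
  by apply/allP => y /(allP t_lt_N); lia.
rewrite t_sorted (negbTE t0) t_ns t_lt_x t_le_2N orbF andbT /=.
apply/and4P; split; lia.
Qed.

End TopBox.

Theorem mainTheorem9 (n : nat) : 1 <= n -> f n = f n.-1 + b (2 * n).
Proof.
case: n => [//|n] _; set N := n.+1.
rewrite /= !fE bE (card_set_seq_split _ _ (fun s => N \in s)); congr (_ + _).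
  apply: (@card_set_seq_bij _ _ (fun s => stack s && (N \notin s)) _ id id) => //= s;
    by rewrite stack_without_top.
apply: (@card_set_seq_rcons _ _ (fun s => stack s && (N \in s)) _ (stack_below_top N)
          (fun _ => N) (fun t => 2 * N - sumn t)) => //.
- exact: stack_topE.
- exact: distinct_partition_topE.
Qed.
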